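(* Let $\mathbb{F}_q$ be a finite field of odd characteristic $p$ with $q = p^n$. If $n$ is even, then equilateral triangles of nonzero sidelength exist in the plane $\mathbb{F}_q^2$. If $n$ is odd, they exist if and only if $p \equiv 1, 3$ or $11 \pmod{12}$.
   Context: For $u,v \in \mathbb{F}_q^2$, $\|u-v\| = (u_1-v_1)^2+(u_2-v_2)^2$. An equilateral triangle of sidelength $\ell$ is a triple $(x_1,x_2,x_3)$ of points of $\mathbb{F}_q^2$ with $\|x_1-x_2\| = \|x_2-x_3\| = \|x_3-x_1\| = \ell$. *)

From HB Require Import structures.
From mathcomp Require Import all_boot all_order all_algebra all_field.
Set Implicit Arguments. Unset Strict Implicit. Unset Printing Implicit Defensive.
Import GRing.Theory.
Local Open Scope ring_scope.

Definition qnorm (F : fieldType) (u v : F * F) : F :=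
  (u.1 - v.1) ^+ 2 + (u.2 - v.2) ^+ 2.

Definition equilateral (F : fieldType) (x1 x2 x3 : F * F) (l : F) : Prop :=
  [/\ qnorm x1 x2 = l, qnorm x2 x3 = l & qnorm x3 x1 = l].

Definition has_nz_equilateral (F : fieldType) : Prop :=
  exists (x1 x2 x3 : F * F) (l : F), l != 0 /\ equilateral x1 x2 x3 l.

(* Placing one vertex at the origin, the other two are vectors u, v with
   |u|^2 = |v|^2 = |u - v|^2 = l, so 2 u.v = l and the Lagrange identity gives
   (2 det(u, v))^2 = 4 |u|^2 |v|^2 - (2 u.v)^2 = 3 l^2.  Hence nondegenerate
   equilateral triangles exist iff 3 is a square, the triangle (0,0), (2,0),
   (1, sqrt 3) giving the converse.  In F_q with q odd and prime to 3,
   3 = (-1)(-3) is a square iff -1 and -3 are both squares or both not;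
   -1 is a square iff F_q^* contains an element of order 4, i.e. 4 | q - 1, and
   -3 = (2w + 1)^2 for a primitive cube root of unity w, i.e. 3 | q - 1.
   Finally q = p^n is 1 mod 12 for n even and p mod 12 for n odd. *)
From HB Require Import structures.
From mathcomp Require Import all_boot all_order all_algebra all_field.
From mathcomp Require Import cyclic zify ring.
Set Implicit Arguments. Unset Strict Implicit. Unset Printing Implicit Defensive.
Import GRing.Theory.

Local Open Scope ring_scope.

Definition is_square (R : pzRingType) (x : R) : Prop := exists y : R, y ^+ 2 = x.

Definition twice_area (F : fieldType) (x1 x2 x3 : F * F) : F :=
  (x1.1 - x3.1) * (x2.2 - x3.2) - (x1.2 - x3.2) * (x2.1 - x3.1).

Lemma equilateral_twice_area (F : fieldType) (x1 x2 x3 : F * F) (l : F) :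
  equilateral x1 x2 x3 l -> (2 * twice_area x1 x2 x3) ^+ 2 = 3 * l ^+ 2.
Proof.
case=> e12 e23 e31.
pose uv := (x1.1 - x3.1) * (x2.1 - x3.1) + (x1.2 - x3.2) * (x2.2 - x3.2).
have polarization : 2 * uv = qnorm x2 x3 + qnorm x3 x1 - qnorm x1 x2.
  by rewrite /uv /qnorm; ring.
rewrite e12 e23 e31 addrK in polarization.
have lagrange : (2 * twice_area x1 x2 x3) ^+ 2 =
    4 * qnorm x2 x3 * qnorm x3 x1 - (2 * uv) ^+ 2.
  by rewrite /twice_area /qnorm /uv; ring.
by rewrite lagrange polarization e23 e31; ring.
Qed.

Lemma equilateral_sqrt3 (F : fieldType) (s : F) :
  s ^+ 2 = 3 -> equilateral (0, 0) (2, 0) (1, s) 4.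
Proof.
move=> s3; have four : (4 : F) = 1 + s ^+ 2 by rewrite s3; ring.
by split; rewrite /qnorm /=; [ring | rewrite four; ring | rewrite four; ring].
Qed.

Lemma has_nz_equilateralE (F : fieldType) :
  (2 : F) != 0 -> has_nz_equilateral F <-> is_square (3 : F).
Proof.
move=> two_neq0; split=> [[x1 [x2 [x3 [l [l_neq0 tri]]]]] | [s s3]].
  exists (2 * twice_area x1 x2 x3 / l).
  by rewrite expr_div_n (equilateral_twice_area tri) mulfK // expf_neq0.
exists (0, 0), (2, 0), (1, s), 4; split; last exact: equilateral_sqrt3.
by rewrite (_ : 4 = 2 * 2) ?mulf_neq0 //; ring.
Qed.

Lemma prim_root_proper_dvd (R : idomainType) (d : nat) (w : R) :
  (0 < d)%N -> w ^+ d = 1 ->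
  (forall k, (k %| d)%N -> (k < d)%N -> w ^+ k != 1) -> d.-primitive_root w.
Proof.
move=> d_gt0 wd1 proper; have [k wk k_dvd_d] := prim_order_exists d_gt0 wd1.
move: (dvdn_leq d_gt0 k_dvd_d); rewrite leq_eqVlt => /orP[/eqP <- // | k_lt_d].
by have := proper k k_dvd_d k_lt_d; rewrite (prim_expr_order wk) eqxx.
Qed.

Lemma prim_root4E (F : fieldType) (w : F) :
  (2 : F) != 0 -> 4.-primitive_root w <-> w ^+ 2 = -1.
Proof.
move=> two_neq0; split=> [w4 | w2].
  have : (w ^+ 2) ^+ 2 == 1 by rewrite -exprM (prim_expr_order w4).
  rewrite sqrf_eq1 -(prim_order_dvd w4) /=; exact: eqP.
have w2_neq1 : w ^+ 2 != 1.
  rewrite w2; apply: contraNneq two_neq0 => neg1.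
  have -> : (2 : F) = 1 - -1 by ring.
  by rewrite neg1 subrr.
apply: prim_root_proper_dvd => //; first by rewrite (exprM w 2 2) w2 sqrrN expr1n.
move=> [|[|[|[|k]]]] // _ _.
by rewrite expr1; apply: contraNneq w2_neq1 => ->; rewrite expr1n.
Qed.

Lemma prim_root3E (F : fieldType) (w : F) :
  (3 : F) != 0 -> 3.-primitive_root w <-> w ^+ 2 + w + 1 = 0.
Proof.
move=> three_neq0.
have cube : w ^+ 3 - 1 = (w - 1) * (w ^+ 2 + w + 1) by ring.
split=> [w3 | w_root].
  have w_neq1 : w != 1 by rewrite -[w]expr1 -(prim_order_dvd w3).
  apply/eqP; move: cube; rewrite (prim_expr_order w3) subrr => /esym/eqP.
  by rewrite mulf_eq0 subr_eq0 (negPf w_neq1).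
apply: prim_root_proper_dvd => //; first by apply/eqP; rewrite -subr_eq0 cube w_root mulr0.
move=> [|[|[|k]]] // _ _; rewrite expr1; apply: contraNneq three_neq0 => w1.
by apply/eqP; rewrite -w_root w1; ring.
Qed.

Lemma is_square_neg3E (F : fieldType) :
  (2 : F) != 0 -> is_square (-3 : F) <-> exists w : F, w ^+ 2 + w + 1 = 0.
Proof.
move=> two_neq0; split=> [[s s2] | [w w_root]].
  have four_neq0 : (4 : F) != 0 by rewrite (_ : 4 = 2 * 2) ?mulf_neq0 //; ring.
  exists ((s - 1) / 2).
  have -> : ((s - 1) / 2) ^+ 2 + (s - 1) / 2 + 1 = (s ^+ 2 + 3) / 4.
    by field; rewrite four_neq0 two_neq0.
  by rewrite s2 addNr mul0r.
exists (2 * w + 1).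
have -> : (2 * w + 1) ^+ 2 = 4 * (w ^+ 2 + w + 1) - 3 by ring.
by rewrite w_root mulr0 sub0r.
Qed.

Section FiniteField.

Variable F : finFieldType.
Local Notation m := #|F|.-1.

Lemma expf_card_pred (x : F) : x != 0 -> x ^+ m = 1.
Proof.
move=> x_neq0; apply: (mulfI x_neq0).
by rewrite -exprS prednK ?expf_card ?mulr1 // ltnW ?finNzRing_gt1.
Qed.

Let m_gt0 : (0 < m)%N.
Proof. by rewrite -ltnS prednK ?finNzRing_gt1 // ltnW ?finNzRing_gt1. Qed.

Lemma finField_prim_root : exists z : F, m.-primitive_root z.
Proof.
have : has m.-primitive_root (enum (predC1 (0 : F))).
  apply: has_prim_root; rewrite ?enum_uniq -?cardE ?cardC1 //.
  apply/allP => x; rewrite mem_enum /= => x_neq0.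
  by rewrite unity_rootE expf_card_pred.
by case/hasP => z _ zm; exists z.
Qed.

Lemma finField_prim_rootP (d : nat) :
  (0 < d)%N -> (exists w : F, d.-primitive_root w) <-> (d %| m)%N.
Proof.
move=> d_gt0; split=> [[w wd] | d_dvd_m].
  have w_neq0 : w != 0 by rewrite (prim_root_eq0 wd) -lt0n.
  by rewrite (prim_order_dvd wd) expf_card_pred.
have [z zm] := finField_prim_root.
by exists (z ^+ (m %/ d)); exact: dvdn_prim_root.
Qed.

Lemma finField_is_square_neg1 :
  (2 : F) != 0 -> is_square (-1 : F) <-> (4 %| m)%N.
Proof.
move=> two_neq0; rewrite -finField_prim_rootP //.
by split=> -[w w4]; exists w; apply/prim_root4E.
Qed.

Lemma finField_is_square_neg3 :
  (2 : F) != 0 -> (3 : F) != 0 -> is_square (-3 : F) <-> (3 %| m)%N.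
Proof.
move=> two_neq0 three_neq0; rewrite is_square_neg3E // -finField_prim_rootP //.
by split=> -[w w3]; exists w; apply/prim_root3E.
Qed.

Hypothesis F_odd : odd #|F|.

Let m_even : odd m = false.
Proof. by move: F_odd; rewrite -{1}(prednK (ltnW (finNzRing_gt1 F))) /= => /negPf. Qed.

Lemma is_square_prim_expr (z : F) (j : nat) :
  m.-primitive_root z -> is_square (z ^+ j) <-> ~~ odd j.
Proof.
move=> zm; split=> [[y yz] | j_even].
  have z_neq0 : z != 0 by rewrite (prim_root_eq0 zm) -lt0n m_gt0.
  have y_neq0 : y != 0.
    by apply: contraTneq (expf_neq0 j z_neq0) => y0; rewrite -yz y0 expr0n /= eqxx.
  have [i yi] := prim_rootP zm (expf_card_pred y_neq0).
  move/eqP: yz; rewrite yi -exprM (eq_prim_root_expr zm) => /eqP ij.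
  by rewrite -(odd_mod j m_even) -ij odd_mod // oddM andbF.
exists (z ^+ j./2); rewrite -exprM muln2.
by rewrite -{2}(odd_double_half j) (negPf j_even).
Qed.

Lemma is_squareM (a b : F) : a != 0 -> b != 0 ->
  is_square (a * b) <-> (is_square a <-> is_square b).
Proof.
move=> a_neq0 b_neq0; have [z zm] := finField_prim_root.
have [i ->] := prim_rootP zm (expf_card_pred a_neq0).
have [j ->] := prim_rootP zm (expf_card_pred b_neq0).
rewrite -exprD !(is_square_prim_expr _ zm) oddD.
by case: (odd i); case: (odd j); split=> // -[h1 h2]; [apply: h2 | apply: h1].
Qed.

End FiniteField.

Local Close Scope ring_scope.

Lemma sqrn_mod12 (p : nat) : ~~ (2 %| p) -> ~~ (3 %| p) -> p ^ 2 = 1 %[mod 12].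
Proof.
rewrite /dvdn -(modn_dvdm p (isT : 2 %| 12)) -(modn_dvdm p (isT : 3 %| 12)) -modnXm.
by move: (ltn_mod p 12); case: (p %% 12) => [|[|[|[|[|[|[|[|[|[|[|[|]]]]]]]]]]]].
Qed.

Lemma expn_mod12 (p n : nat) : ~~ (2 %| p) -> ~~ (3 %| p) ->
  p ^ n = (if odd n then p else 1) %[mod 12].
Proof.
move=> p_odd p_coprime3; rewrite -[in LHS](odd_double_half n) expnD -mul2n expnM.
rewrite -modnMmr -modnXm sqrn_mod12 // exp1n modnMmr muln1.
by case: (odd n).
Qed.

Lemma mod12_criterion (q : nat) : ~~ (2 %| q) -> ~~ (3 %| q) ->
  ((4 %| q.-1) <-> (3 %| q.-1)) <-> q %% 12 \in [:: 1; 11].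
Proof. by rewrite !inE => q_odd q_coprime3; split; lia. Qed.

Theorem corollary4p2 (F : finFieldType) (p n : nat) :
  prime p -> p != 2 -> (p \in [pchar F])%R -> #|F| = p ^ n ->
  (~~ odd n -> has_nz_equilateral F) /\
  (odd n -> (has_nz_equilateral F <-> p %% 12 \in [:: 1; 3; 11])).
Proof.
move=> p_prime p_neq2 pF cardF.
have natF_neq0 k : prime k -> k != p -> (k%:R != 0 :> F)%R.
  by move=> k_prime k_neq_p; rewrite -(dvdn_pcharf pF) dvdn_prime2 // eq_sym.
have two_neq0 : (2 != 0 :> F)%R by apply: natF_neq0; rewrite // eq_sym.
have [p3 | p_neq3] := eqVneq p 3.
  have : has_nz_equilateral F.
    apply/has_nz_equilateralE => //; exists 0%R; apply/esym/eqP.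
    by rewrite expr0n -(dvdn_pcharf pF) p3.
  by rewrite p3.
have three_neq0 : (3 != 0 :> F)%R by apply: natF_neq0; rewrite // eq_sym.
have p_odd : ~~ (2 %| p) by rewrite dvdn_prime2 // eq_sym.
have p_coprime3 : ~~ (3 %| p) by rewrite dvdn_prime2 // eq_sym.
have q_odd : ~~ (2 %| #|F|) by rewrite cardF Euclid_dvdX // negb_and p_odd.
have q_coprime3 : ~~ (3 %| #|F|) by rewrite cardF Euclid_dvdX // negb_and p_coprime3.
have F_odd : odd #|F| by rewrite -[odd _]negbK -dvdn2.
have key : has_nz_equilateral F <-> ((4 %| #|F|.-1) <-> (3 %| #|F|.-1)).
  rewrite has_nz_equilateralE //.
  have -> : (3 = -1 * -3 :> F)%R by rewrite mulN1r opprK.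
  rewrite is_squareM ?oppr_eq0 ?oner_eq0 //.
  by rewrite finField_is_square_neg1 // finField_is_square_neg3.
rewrite key (mod12_criterion q_odd q_coprime3) !inE.
have := expn_mod12 n p_odd p_coprime3; rewrite -cardF.
by case: (odd n) => /= q_mod12; split=> // _; lia.
Qed.
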